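(* Let $gl_n(\mathbb{C})$ be the Lie algebra of all $n\times n$ complex matrices with bracket $[x,y]=xy-yx$. A map $f:gl_n(\mathbb{C})\times gl_n(\mathbb{C})\to gl_n(\mathbb{C})$ is a biderivation of $gl_n(\mathbb{C})$ if and only if there are complex numbers $\lambda,\mu$ such that $f(x,y)=\mu\,\mathrm{tr}(x)\,\mathrm{tr}(y)\,I_n+\lambda[x,y]$ for all $x,y\in gl_n(\mathbb{C})$.
   Context: A biderivation of a Lie algebra $L$ is a bilinear map $f:L\times L\to L$ such that $f([x,y],z)=[x,f(y,z)]+[f(x,z),y]$ and $f(x,[y,z])=[f(x,y),z]+[y,f(x,z)]$ for all $x,y,z\in L$. $I_n$ is the identity matrix and $\mathrm{tr}$ the trace. *)

From mathcomp Require Import all_boot all_algebra.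
From mathcomp Require Import complex.
From mathcomp Require Import Rstruct.
Set Implicit Arguments. Unset Strict Implicit. Unset Printing Implicit Defensive.
Import GRing.Theory Num.Theory.
Local Open Scope ring_scope.

Definition CC : numClosedFieldType := Rdefinitions.R[i].

Definition lie_br (K : comRingType) (n : nat) (x y : 'M[K]_n) : 'M[K]_n :=
  x *m y - y *m x.

Definition bilinear_map (K : comRingType) (n : nat)
  (f : 'M[K]_n -> 'M[K]_n -> 'M[K]_n) : Prop :=
  (forall (a : K) x x' y, f (a *: x + x') y = a *: f x y + f x' y) /\
  (forall (a : K) x y y', f x (a *: y + y') = a *: f x y + f x y').

Definition biderivation (K : comRingType) (n : nat)
  (f : 'M[K]_n -> 'M[K]_n -> 'M[K]_n) : Prop :=
  bilinear_map f /\
  (forall x y z, f (lie_br x y) z = lie_br x (f y z) + lie_br (f x z) y) /\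
  (forall x y z, f x (lie_br y z) = lie_br (f x y) z + lie_br y (f x z)).

From HB Require Import structures.
From mathcomp Require Import all_boot all_algebra.
From mathcomp Require Import complex Rstruct ring.
Set Implicit Arguments. Unset Strict Implicit. Unset Printing Implicit Defensive.
Import GRing.Theory Num.Theory.
Local Open Scope ring_scope.

(* Every derivation D of gl_N is inner up to a central map:
   D x = [A, x] + c tr(x) I.  Subtracting a suitable ad C makes every D E_ii
   diagonal; then D E_pq = t_pq E_pq for p <> q with t_pq = d_p - d_q, so after
   subtracting ad (diag d) the derivation kills all off-diagonal units and is
   x |-> tr(x) D E_00, where D E_00 is scalar.
   Both partial maps of a biderivation f are derivations.  Evaluating at E_00,
   whose trace is 1, and comparing traces shows that the central parts combine
   into mu tr(x) tr(y) I, so G := f - mu tr tr I satisfies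
   G(x, y) = [A_y, x] = [B_x, y].  For y = E_kl this forces ad A_y to be a
   multiple b_kl ad E_kl, and computing G(E_ij, E_kl) through either argument
   shows that all the b_kl coincide, whence G = lambda [., .]. *)

Section Entries.
Variables (R : pzRingType) (m n : nat).
Implicit Types A B : 'M[R]_(m, n).

Lemma addmxE A B i j : (A + B) i j = A i j + B i j. Proof. by rewrite mxE. Qed.
Lemma oppmxE A i j : (- A) i j = - A i j. Proof. by rewrite mxE. Qed.
Lemma scalemxE a A i j : (a *: A) i j = a * A i j. Proof. by rewrite mxE. Qed.
Lemma mx0E i j : (0 : 'M[R]_(m, n)) i j = 0. Proof. by rewrite mxE. Qed.

Lemma mulmxnE A k i j : (A *+ k) i j = A i j *+ k.
Proof. by elim: k => [|k IHk]; rewrite ?mulr0n ?mxE // !mulrS addmxE IHk. Qed.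

End Entries.

Section DeltaProducts.
Variables (R : pzRingType) (n : nat).

Lemma delta_mx_mulE (i j : 'I_n) (x : 'M[R]_n) r s :
  (delta_mx i j *m x) r s = (r == i)%:R * x j s.
Proof.
rewrite !mxE (bigD1 j) //= big1 ?addr0 => [|k /negPf kj]; rewrite !mxE.
  by rewrite eqxx andbT.
by rewrite kj andbF mul0r.
Qed.

Lemma mul_delta_mxE (i j : 'I_n) (x : 'M[R]_n) r s :
  (x *m delta_mx i j) r s = x r i * (j == s)%:R.
Proof.
rewrite !mxE (bigD1 i) //= big1 ?addr0 => [|k /negPf ki]; rewrite !mxE.
  by rewrite eqxx [j == s]eq_sym.
by rewrite ki mulr0.
Qed.

Lemma mxtrace_delta_mx (i j : 'I_n) : \tr (delta_mx i j : 'M[R]_n) = (i == j)%:R.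
Proof.
rewrite /mxtrace (bigD1 i) //= big1 ?addr0 => [|k /negPf ki]; rewrite mxE.
  by rewrite eqxx.
by rewrite ki.
Qed.

End DeltaProducts.

Ltac simpl_index_eqs :=
  repeat match goal with
  | H : is_true (?a != ?a) |- _ => by rewrite eqxx in H
  | H : is_true (?a != ?b) |- context [?a == ?b] => rewrite (negbTE H)
  | H : is_true (?a != ?b) |- context [?b == ?a] => rewrite [b == a]eq_sym (negbTE H)
  | |- context [?a == ?a] => rewrite eqxx
  end;
  rewrite /= ?(andbT, andbF, andTb, andFb, mulr0n, mulr1n, mulr0, mul0r,
               mulr1, mul1r, addr0, add0r, subr0, sub0r, oppr0).

(* [addmxE] also sees through [lie_br], so entries of brackets become entries
   of products, which the two lemmas above evaluate. *)
Ltac mx_entries :=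
  rewrite ?(addmxE, oppmxE, scalemxE, mulmxnE, mx0E) ?(delta_mx_mulE, mul_delta_mxE)
    ?mxE.

Ltac index_cases :=
  simpl_index_eqs;
  repeat match goal with
  | |- context [?a == ?b] =>
      first [is_var a | is_var b];
      case: (eqVneq a b) => [?|?]; [subst; simpl_index_eqs | simpl_index_eqs]
  end.

(* Closes [a = b -> c = d] when c - d = +-(a - b) is a ring identity. *)
Ltac ring_from_hyp :=
  let hyp := fresh "hyp" in
  move=> /eqP; rewrite eq_sym -subr_eq0 => /eqP; intro hyp;
  apply/eqP; rewrite -subr_eq0; apply/eqP;
  first [ring | rewrite -[in RHS]hyp; ring
        | rewrite -[in RHS]oppr0 -[in RHS]hyp; ring].

Section LieBracket.
Variables (R : comNzRingType) (n : nat).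
Implicit Types (x y z : 'M[R]_n) (a : R).

Lemma lie_br_is_linear x : linear (lie_br x).
Proof.
move=> a u v; rewrite /lie_br mulmxDl mulmxDr -scalemxAl -scalemxAr scalerBr.
by rewrite opprD addrACA.
Qed.

HB.instance Definition _ x :=
  GRing.isLinear.Build R 'M[R]_n 'M[R]_n _ (lie_br x) (lie_br_is_linear x).

Lemma lie_brDr x y z : lie_br x (y + z) = lie_br x y + lie_br x z.
Proof. exact: linearD. Qed.

Lemma lie_brZr a x y : lie_br x (a *: y) = a *: lie_br x y.
Proof. exact: linearZ. Qed.

Lemma lie_brC x y : lie_br x y = - lie_br y x.
Proof. by rewrite /lie_br opprB. Qed.

Lemma lie_brDl x y z : lie_br (x + y) z = lie_br x z + lie_br y z.
Proof. by rewrite /lie_br mulmxDl mulmxDr opprD addrACA. Qed.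

Lemma lie_brNl x y : lie_br (- x) y = - lie_br x y.
Proof. by rewrite /lie_br mulNmx mulmxN opprK opprB addrC. Qed.

Lemma lie_brBl x y z : lie_br (x - y) z = lie_br x z - lie_br y z.
Proof. by rewrite lie_brDl lie_brNl. Qed.

Lemma lie_brZl a x y : lie_br (a *: x) y = a *: lie_br x y.
Proof. by rewrite /lie_br -scalemxAl -scalemxAr scalerBr. Qed.

Lemma lie_br0r x : lie_br x 0 = 0.
Proof. by rewrite /lie_br mulmx0 mul0mx subrr. Qed.

Lemma lie_br0l x : lie_br 0 x = 0.
Proof. by rewrite /lie_br mulmx0 mul0mx subrr. Qed.

Lemma lie_br_jacobi x y z :
  lie_br x (lie_br y z) = lie_br (lie_br x y) z + lie_br y (lie_br x z).
Proof.
rewrite /lie_br !(mulmxBl, mulmxBr) !mulmxA.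
move: (x *m y *m z) (x *m z *m y) (y *m z *m x) (z *m y *m x) (y *m x *m z)
  (z *m x *m y) => a b c d e f.
by apply/matrixP => r s; rewrite !mxE; ring.
Qed.

Lemma mxtrace_lie_br x y : \tr (lie_br x y) = 0.
Proof. by rewrite /lie_br linearB /= mxtrace_mulC subrr. Qed.

Lemma lie_br_scalar_mxl a x : lie_br a%:M x = 0.
Proof. by rewrite /lie_br scalar_mxC subrr. Qed.

Lemma lie_br_scalar_mxr a x : lie_br x a%:M = 0.
Proof. by rewrite lie_brC lie_br_scalar_mxl oppr0. Qed.

Lemma lie_br_delta_mx (i j k l : 'I_n) :
  lie_br (delta_mx i j) (delta_mx k l)
  = delta_mx i l *+ (j == k) - delta_mx k j *+ (l == i) :> 'M[R]_n.
Proof. by rewrite /lie_br !mul_delta_mx_cond. Qed.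

Lemma lie_br_delta_mx_comp (i j k : 'I_n) :
  i != k -> lie_br (delta_mx i j) (delta_mx j k) = delta_mx i k :> 'M[R]_n.
Proof. by move=> ik; rewrite lie_br_delta_mx eqxx eq_sym (negPf ik) subr0. Qed.

Lemma lie_br_delta_mx_swap (i j : 'I_n) :
  lie_br (delta_mx i j) (delta_mx j i) = delta_mx i i - delta_mx j j :> 'M[R]_n.
Proof. by rewrite lie_br_delta_mx !eqxx. Qed.

Lemma lie_br_delta_mx_diag (i j : 'I_n) :
  lie_br (delta_mx i i) (delta_mx j j) = 0 :> 'M[R]_n.
Proof. by rewrite lie_br_delta_mx eq_sym; case: eqVneq => [->|]; rewrite ?subrr. Qed.

Lemma lie_br_diag_mx_delta (d : 'rV[R]_n) (i j : 'I_n) :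
  lie_br (diag_mx d) (delta_mx i j) = (d 0 i - d 0 j) *: delta_mx i j.
Proof. by apply/matrixP => r s; mx_entries; index_cases; ring. Qed.

End LieBracket.

Definition derivation (R : comNzRingType) (n : nat) (D : 'M[R]_n -> 'M[R]_n) :=
  forall x y, D (lie_br x y) = lie_br x (D y) + lie_br (D x) y.

Lemma derivation_lie_br (R : comNzRingType) (n : nat) (c : 'M[R]_n) :
  derivation (lie_br c).
Proof. by move=> x y; rewrite lie_br_jacobi addrC. Qed.

Lemma derivationB (R : comNzRingType) (n : nat) (D D' : 'M[R]_n -> 'M[R]_n) :
  derivation D -> derivation D' -> derivation (D \- D').
Proof.
by move=> dD dD' x y /=; rewrite dD dD' linearB lie_brBl opprD addrACA.
Qed.

Section Derivations.
Variables (K : fieldType) (n : nat).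
Hypothesis K_char0 : has_pchar0 K.
Local Notation N := n.+1.
Local Notation M := 'M[K]_N.
Local Notation E := (@delta_mx K N N).

Lemma eq_oppr_self_eq0 (x : K) : x = - x -> x = 0.
Proof.
move/eqP; rewrite -addr_eq0 -mulr2n -mulr_natr mulf_eq0.
by rewrite ((pcharf0P K).1 K_char0 2) orbF => /eqP.
Qed.

Lemma linear_sum_delta (g : {linear M -> M}) x :
  g x = \sum_i \sum_j x i j *: g (E i j).
Proof.
rewrite {1}(matrix_sum_delta x) linear_sum; apply: eq_bigr => i _.
by rewrite linear_sum; apply: eq_bigr => j _; rewrite linearZ.
Qed.

Section NormalizeDiagonal.
Variables (D : {linear M -> M}) (D_der : derivation D).

Definition diag_normalizer : M :=
  \matrix_(p, q) (if p == q then 0 else D (E q q) p q).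

Lemma derivation_normalized_diag i :
  is_diag_mx (D (E i i) - lie_br diag_normalizer (E i i)).
Proof.
apply/is_diag_mxP => p q /[!val_eqE] pq.
have := congr1 (fun X : M => X p q) (D_der (E i i) (E q q)).
rewrite lie_br_delta_mx_diag linear0; mx_entries.
by index_cases; ring_from_hyp.
Qed.

End NormalizeDiagonal.

Section DiagonalPreserving.
Variables (D : {linear M -> M}) (D_der : derivation D).
Hypothesis D_diag : forall i, is_diag_mx (D (E i i)).

Let D_diagE i : D (E i i) = diag_mx (\row_j D (E i i) j j).
Proof.
apply/matrixP => r s; rewrite !mxE; case: eqVneq => [->|rs] //.
by have /is_diag_mxP := D_diag i; apply.
Qed.

Definition delta_coef p q := D (E p q) p q.

Lemma derivation_delta_offdiag p q : p != q -> D (E p q) = delta_coef p q *: E p q.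
Proof.
(* E_pq = [E_pp, E_pq] = [E_pq, E_qq] confines D E_pq to row p and column q. *)
move=> pq; apply/matrixP => r s; rewrite /delta_coef.
have := congr1 (fun X : M => X r s) (D_der (E p p) (E p q)).
have := congr1 (fun X : M => X p s) (D_der (E p q) (E q q)).
rewrite !lie_br_delta_mx_comp // [D (E p p)]D_diagE [D (E q q)]D_diagE; mx_entries.
by index_cases; first [by move=> * | by move=> -> | by move=> _ ->
  | by move=> _ /eq_oppr_self_eq0].
Qed.

Lemma derivation_delta_diag q : D (E q q) = (D (E q q) q q)%:M.
Proof.
apply/matrixP => r s; rewrite [D _]D_diagE !mxE eqxx.
case: (eqVneq r s) => _; rewrite ?mulr0n ?mulr1n //.
case: (eqVneq r q) => [->//|rq].
have := congr1 (fun X : M => X r q) (D_der (E r q) (E q q)).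
rewrite lie_br_delta_mx_comp // [D (E q q)]D_diagE; mx_entries.
by index_cases; ring_from_hyp.
Qed.

Local Notation t := delta_coef.

Lemma derivation_delta_coef_antisym p q : p != q -> t p q + t q p = 0.
Proof.
move=> pq; have eqD : D (E p p) - D (E q q) = (t p q + t q p) *: (E p p - E q q).
  rewrite -linearB -lie_br_delta_mx_swap D_der.
  rewrite [D (E q p)]derivation_delta_offdiag 1?eq_sym //.
  rewrite [D (E p q)]derivation_delta_offdiag //.
  by rewrite linearZ /= lie_brZl lie_br_delta_mx_swap scalerDl addrC.
rewrite [D (E p p)]derivation_delta_diag [D (E q q)]derivation_delta_diag in eqD.
apply: eq_oppr_self_eq0.
have := congr1 (fun X : M => X p p) eqD; have := congr1 (fun X : M => X q q) eqD.
by mx_entries; index_cases; move=> -> /esym; rewrite mulrN1.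
Qed.

Lemma derivation_delta_coef_add p q r :
  p != q -> q != r -> p != r -> t p r = t p q + t q r.
Proof.
move=> pq qr pr; have := D_der (E p q) (E q r).
rewrite lie_br_delta_mx_comp // [D (E p r)]derivation_delta_offdiag //.
rewrite [D (E p q)]derivation_delta_offdiag // [D (E q r)]derivation_delta_offdiag //.
rewrite linearZ /= lie_brZl lie_br_delta_mx_comp // -scalerDl => /(congr1 (fun X : M => X p r)).
by rewrite !mxE !eqxx !mulr1 addrC.
Qed.

Definition offdiag_potential : 'rV[K]_N := \row_p (if p == 0 then 0 else t p 0).

Lemma derivation_delta_coefE p q :
  p != q -> t p q = offdiag_potential 0 p - offdiag_potential 0 q.
Proof.
have t0E k : k != 0 -> t 0 k = - t k 0.
  by move=> k0; apply/eqP; rewrite -addr_eq0 addrC derivation_delta_coef_antisym.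
move=> pq; rewrite !mxE.
case: (eqVneq p 0) => [p0|p0]; case: (eqVneq q 0) => [q0|q0].
- by rewrite p0 q0 eqxx in pq.
- by rewrite p0 sub0r t0E.
- by rewrite q0 subr0.
by rewrite (derivation_delta_coef_add (_ : p != 0)) // 1?eq_sym // t0E.
Qed.

Lemma derivation_delta_offdiag_inner p q :
  p != q -> D (E p q) = lie_br (diag_mx offdiag_potential) (E p q).
Proof.
move=> pq.
by rewrite lie_br_diag_mx_delta -derivation_delta_coefE -?derivation_delta_offdiag.
Qed.

End DiagonalPreserving.

Section CentralDerivation.
Variables (D : {linear M -> M}) (D_der : derivation D).
Hypothesis D_offdiag : forall p q, p != q -> D (E p q) = 0 :> M.

Lemma derivation_offdiag0E x : D x = \tr x *: D (E 0 0).
Proof.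
have diagE p : D (E p p) = D (E 0 0).
  case: (eqVneq p 0) => [->//|p0]; have p0' : 0 != p by rewrite eq_sym.
  apply/eqP; rewrite -subr_eq0 -linearB -lie_br_delta_mx_swap D_der.
  by rewrite !D_offdiag // lie_br0r lie_br0l addr0.
rewrite (linear_sum_delta D) /mxtrace scaler_suml; apply: eq_bigr => i _.
rewrite (bigD1 i) //= big1 ?addr0 => [|j ji]; first by rewrite diagE.
by rewrite D_offdiag 1?eq_sym // scaler0.
Qed.

End CentralDerivation.

Theorem derivation_decomposition (D : {linear M -> M}) : derivation D ->
  exists (A : M) (c : K), forall x, D x = lie_br A x + (c * \tr x)%:M.
Proof.
move=> D_der.
pose C := diag_normalizer D.
pose D1 : {linear M -> M} := D \- lie_br C.
have D1_der : derivation D1 := derivationB D_der (derivation_lie_br C).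
have D1_diag i : is_diag_mx (D1 (E i i)) := derivation_normalized_diag D_der i.
pose d := offdiag_potential D1.
pose D2 : {linear M -> M} := D1 \- lie_br (diag_mx d).
have D2_der : derivation D2 := derivationB D1_der (derivation_lie_br _).
have D2_offdiag p q : p != q -> D2 (E p q) = 0.
  by move=> pq; rewrite /= -derivation_delta_offdiag_inner // subrr.
exists (C + diag_mx d), (D1 (E 0 0) 0 0) => x.
have D1_00 := derivation_delta_diag D1_der D1_diag 0; rewrite /= in D1_00.
have := derivation_offdiag0E D2_der D2_offdiag x.
rewrite /= lie_br_diag_mx_delta subrr scale0r subr0 [X in _ *: X]D1_00.
rewrite scale_scalar_mx mulrC => <-.
by rewrite lie_brDl [in RHS]addrC -[D x - _ - _]addrA -opprD subrK.
Qed.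
End Derivations.

Section Biderivations.
Variables (K : fieldType) (n : nat).
Hypothesis K_char0 : has_pchar0 K.
Local Notation N := n.+1.
Local Notation M := 'M[K]_N.
Local Notation E := (@delta_mx K N N).

Lemma lie_brD_scalar_mx_inj (A B x y : M) (s u : K) :
  lie_br A x + s%:M = lie_br B y + u%:M -> s = u.
Proof.
move/(congr1 mxtrace); rewrite [LHS]mxtraceD [RHS]mxtraceD !mxtrace_lie_br.
rewrite !add0r !mxtrace_scalar => /eqP; rewrite -subr_eq0 -mulrnBl -mulr_natr.
by rewrite mulf_eq0 ((pcharf0P K).1 K_char0) orbF subr_eq0 => /eqP.
Qed.

Lemma lie_br_dim1 (x y : M) : n = 0%N -> lie_br x y = 0.
Proof.
move=> n0; have ordE (a : 'I_N) : a = 0.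
  by apply/val_inj; case: a => a /=; rewrite n0 ltnS leqn0 => /eqP.
apply/eqP; rewrite subr_eq0; apply/eqP/matrixP => i j; rewrite !mxE.
by apply: eq_bigr => k _; rewrite (ordE i) (ordE j) (ordE k) mulrC.
Qed.

Section PositiveDim.
Hypothesis n_gt0 : (0 < n)%N.

Definition ord_other (k : 'I_N) : 'I_N := if k == 0 then ord_max else 0.

Lemma ord_other_neq k : ord_other k != k.
Proof.
rewrite /ord_other; case: (eqVneq k 0) => [->|]; last by rewrite eq_sym.
by rewrite -val_eqE /= -lt0n.
Qed.

Lemma lie_br_support_delta (A : M) k l :
  (forall i j p q, p != k -> q != l -> lie_br A (E i j) p q = 0) ->
  exists b, forall x, lie_br A x = b *: lie_br (E k l) x.
Proof.
move=> supp; set k' := ord_other k; set l' := ord_other l.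
have k'k : k' != k := ord_other_neq k; have l'l : l' != l := ord_other_neq l.
have offdiag p q : p != q -> p != k -> A p q = 0.
  by move=> pq pk; have := supp q l' p l' pk l'l; mx_entries; index_cases.
have row q : q != k -> q != l -> A k q = 0.
  move=> qk ql; have := supp k' k k' q k'k ql; mx_entries; index_cases.
  by move/eqP; rewrite oppr_eq0 => /eqP.
have diag p q : p != k -> q != l -> A p p = A q q.
  move=> pk ql; have := supp p q p q pk ql; mx_entries; index_cases.
  by move/eqP; rewrite subr_eq0 => /eqP.
pose a := A k' k'; pose b := A k l - (k == l)%:R * a; exists b => x.
suff -> : A = a%:M + b *: E k l.
  by rewrite lie_brDl lie_br_scalar_mxl add0r lie_brZl.
have diag_other p : p != k -> A p p = a.
  by move=> pk; rewrite /a (diag p l') // (diag k' l').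
apply/matrixP => p q; mx_entries; rewrite /b /a; index_cases.
all: first [done | by rewrite addrC subrK | by rewrite diag_other
           | by rewrite (diag k' k) | by rewrite offdiag // | by rewrite row // eq_sym].
Qed.

Section OneSide.
Variable G : M -> M -> M.
Hypothesis G_left : forall y, exists A, forall x, G x y = lie_br A x.
Hypothesis G_right : forall x, exists B, forall y, G x y = lie_br B y.

Lemma inner_both_delta_scale k l : exists b, forall x, G x (E k l) = b *: lie_br (E k l) x.
Proof.
have [A GA] := G_left (E k l).
have [|b Ab] := @lie_br_support_delta A k l; last by exists b => x; rewrite GA Ab.
move=> i j p q pk ql; rewrite -GA; have [B GB] := G_right (E i j).
by rewrite GB; mx_entries; index_cases.
Qed.

End OneSide.

Lemma lie_br_delta_coef_const (b c : 'I_N * 'I_N -> K) :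
    (forall i j k l, (b (k, l) + c (i, j)) *: lie_br (E i j) (E k l) = 0) ->
  forall k l, b (k, l) = b (0, ord_max).
Proof.
move=> coefE.
have b_eq k i j l : ~~ [&& j == k & k == i] -> ~~ [&& i == j & j == l] ->
    b (k, i) = b (j, l).
  move=> jki ijl.
  have := congr1 (fun X : M => X i l) (coefE i j j l).
  have := congr1 (fun X : M => X k j) (coefE i j k i).
  rewrite !lie_br_delta_mx; mx_entries; index_cases;
    first [by rewrite ?eqxx /= in jki ijl
          | move=> /eqP; rewrite mulrN1 oppr_eq0 addr_eq0 => /eqP -> /eqP;
            by rewrite addr_eq0 => /eqP].
have m0 : (0 == ord_max :> 'I_N) = false.
  by apply/negbTE; rewrite -val_eqE /= eq_sym -lt0n.
move=> k l; have [->|k0] := eqVneq k 0; last first.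
  by apply: b_eq; rewrite ?m0 ?andbF // eq_sym (negPf k0).
have [->|l0] := eqVneq l 0; last first.
  by apply: b_eq; rewrite ?m0 ?andbF // eq_sym (negPf l0).
rewrite (b_eq 0 0 ord_max ord_max) ?m0 ?andbF //; last by rewrite eq_sym m0.
by apply: b_eq; rewrite m0 ?andbF.
Qed.

End PositiveDim.

Lemma inner_both_lie_br (G : M -> M -> M) :
  (forall y, exists A, forall x, G x y = lie_br A x) ->
  (forall x, exists B, forall y, G x y = lie_br B y) ->
  exists lam, forall x y, G x y = lam *: lie_br x y.
Proof.
move=> G_left G_right; case: (posnP n) => [n0|n_gt0].
  by exists 0 => x y; have [A ->] := G_left y; rewrite !lie_br_dim1 // scale0r.
have [b Gb] := fin_all_exists (fun kl : 'I_N * 'I_N =>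
  inner_both_delta_scale n_gt0 G_left G_right kl.1 kl.2).
have [c Gc] := fin_all_exists (fun ij : 'I_N * 'I_N =>
  inner_both_delta_scale n_gt0 (G := fun x y => G y x) G_right G_left ij.1 ij.2).
have coefE i j k l : (b (k, l) + c (i, j)) *: lie_br (E i j) (E k l) = 0.
  have := Gc (i, j) (E k l); rewrite /= (Gb (k, l)) lie_brC scalerN => /esym/eqP.
  by rewrite -addr_eq0 -scalerDl addrC => /eqP.
have b_const := lie_br_delta_coef_const n_gt0 coefE.
exists (- b (0, ord_max)) => x y; have [B GB] := G_right x.
rewrite GB (linear_sum_delta (lie_br B) y) (linear_sum_delta (lie_br x) y) /=.
rewrite scaler_sumr; apply: eq_bigr => i _; rewrite scaler_sumr.
apply: eq_bigr => j _; rewrite -GB (Gb (i, j)) b_const lie_brC /=.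
by rewrite !scalerN scaleNr !scalerA mulrC.
Qed.

Section Biderivation.
Variable f : M -> M -> M.
Hypothesis f_bider : biderivation f.

Lemma biderivation_decompositionl y :
  exists (A : M) (c : K), forall x, f x y = lie_br A x + (c * \tr x)%:M.
Proof.
have [[f_lin _] [f_der _]] := f_bider.
pose D : {linear M -> M} := HB.pack (f^~ y)
  (GRing.isLinear.Build K M M *:%R (f^~ y) (fun a x x' => f_lin a x x' y)).
by apply: (derivation_decomposition K_char0 (D := D)) => x z; apply: f_der.
Qed.

Lemma biderivation_decompositionr x :
  exists (B : M) (c : K), forall y, f x y = lie_br B y + (c * \tr y)%:M.
Proof.
have [[_ f_lin] [_ f_der]] := f_bider.
pose D : {linear M -> M} := HB.pack (f x)
  (GRing.isLinear.Build K M M *:%R (f x) (fun a y y' => f_lin a x y y')).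
by apply: (derivation_decomposition K_char0 (D := D)) => y z; rewrite /= f_der addrC.
Qed.

Lemma biderivation_trace_lie_br : exists lambda mu : K, forall x y,
  f x y = (mu * \tr x * \tr y)%:M + lambda *: lie_br x y.
Proof.
have tr00 : \tr (E 0 0) = 1 by rewrite mxtrace_delta_mx eqxx.
have [B0 [mu B0E]] := biderivation_decompositionr (E 0 0).
have left y : exists A, forall x, f x y = lie_br A x + (mu * \tr x * \tr y)%:M.
  have [A [c AE]] := biderivation_decompositionl y; exists A => x.
  rewrite AE; suff -> : c = mu * \tr y by rewrite mulrAC.
  apply: (@lie_brD_scalar_mx_inj A B0 (E 0 0) y).
  by have := AE (E 0 0); rewrite tr00 mulr1 => <-; rewrite B0E.
have right x : exists B, forall y, f x y = lie_br B y + (mu * \tr x * \tr y)%:M.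
  have [B [d BE]] := biderivation_decompositionr x; exists B => y.
  rewrite BE; suff dE : d = mu * \tr x by rewrite dE.
  have [A AE] := left (E 0 0).
  apply: (@lie_brD_scalar_mx_inj B A (E 0 0) x).
  by have := AE x; rewrite BE tr00 !mulr1 => ->.
pose G x y := f x y - (mu * \tr x * \tr y)%:M.
have G_left y : exists A, forall x, G x y = lie_br A x.
  by have [A AE] := left y; exists A => x; rewrite /G AE addrK.
have G_right x : exists B, forall y, G x y = lie_br B y.
  by have [B BE] := right x; exists B => y; rewrite /G BE addrK.
have [lam G_lam] := inner_both_lie_br G_left G_right.
by exists lam, mu => x y; rewrite -G_lam addrC subrK.
Qed.

End Biderivation.

End Biderivations.

Lemma trace_lie_br_biderivation (R : comNzRingType) (n : nat)
    (f : 'M[R]_n -> 'M[R]_n -> 'M[R]_n) (lambda mu : R) :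
  (forall x y, f x y = (mu * \tr x * \tr y)%:M + lambda *: lie_br x y) ->
  biderivation f.
Proof.
have scalar0 : (0 : R)%:M = 0 :> 'M[R]_n by apply/matrixP => i j; rewrite !mxE mul0rn.
move=> fE; split; [split|split].
- move=> a x x' y; rewrite !fE mxtraceD mxtraceZ lie_brDl lie_brZl.
  move: (lie_br x y) (lie_br x' y) => u v.
  by apply/matrixP => r s; mx_entries; ring.
- move=> a x y y'; rewrite !fE mxtraceD mxtraceZ [lie_br x _]linearP /=.
  move: (lie_br x y) (lie_br x y') => u v.
  by apply/matrixP => r s; mx_entries; ring.
- move=> x y z; rewrite !fE mxtrace_lie_br mulr0 mul0r scalar0 add0r.
  rewrite (lie_brDr _ _%:M) lie_brZr lie_br_scalar_mxr add0r.
  rewrite (lie_brDl _%:M) lie_brZl lie_br_scalar_mxl add0r -scalerDr.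
  by rewrite lie_br_jacobi [lie_br (lie_br x z) y]lie_brC -addrA subrr addr0.
- move=> x y z; rewrite !fE mxtrace_lie_br mulr0 scalar0 add0r.
  rewrite (lie_brDl _%:M) lie_brZl lie_br_scalar_mxl add0r.
  by rewrite (lie_brDr _ _%:M) lie_brZr lie_br_scalar_mxr add0r -scalerDr lie_br_jacobi.
Qed.

Theorem biderivation_gl (K : fieldType) (n : nat)
    (f : 'M[K]_n -> 'M[K]_n -> 'M[K]_n) :
  has_pchar0 K ->
  biderivation f <-> exists lambda mu : K, forall x y,
    f x y = (mu * \tr x * \tr y)%:M + lambda *: lie_br x y.
Proof.
move=> K_char0; split=> [f_bider | [lambda [mu fE]]].
  case: n f f_bider => [|n] f f_bider; last exact: biderivation_trace_lie_br.
  by exists 0, 0 => x y; apply/matrixP => -[].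
exact: trace_lie_br_biderivation fE.
Qed.

Theorem theorem3p2 (n : nat) (f : 'M[CC]_n -> 'M[CC]_n -> 'M[CC]_n) :
  biderivation f <->
  exists (lambda mu : CC), forall x y : 'M[CC]_n,
    f x y = (mu * \tr x * \tr y)%:M + lambda *: lie_br x y.
Proof. exact: biderivation_gl (pchar_num CC). Qed.
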